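(* Let $\Delta$ be a local derivation of $\mathcal{S}$ with $\Delta(G_0)=0$. Then for every $m\in\mathbb{Z}\setminus\{0\}$ there exists $a_m\in\mathbb{C}$ such that $\Delta(G_m)=a_mG_m$.
   Context: $\mathcal{S}$ is the centerless super Virasoro algebra: the Lie superalgebra over $\mathbb{C}$ with basis $\{L_m,G_n: m,n\in\mathbb{Z}\}$, $L_m$ even, $G_n$ odd, and brackets $[L_m,L_n]=(m-n)L_{m+n}$, $[L_m,G_r]=(\frac m2-r)G_{m+r}$, $[G_r,G_s]=2L_{r+s}$. A homogeneous linear map $D$ of parity $|D|$ is a derivation if $D([x,y])=[D(x),y]+(-1)^{|D||x|}[x,D(y)]$ for homogeneous $x,y$; derivations are sums of even and odd ones. A linear map $\Delta:\mathcal{S}\to\mathcal{S}$ is a local derivation if for every $x$ there is a derivation $D_x$ with $\Delta(x)=D_x(x)$. *)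

From HB Require Import structures.
From mathcomp Require Import all_boot all_order all_algebra.
From mathcomp Require Import finmap.
From mathcomp Require Import monalg.
From mathcomp.real_closed Require Import complex.
From mathcomp Require Import Rstruct.
From Stdlib Require Import Rdefinitions.

Set Implicit Arguments.
Unset Strict Implicit.
Unset Printing Implicit Defensive.

Import GRing.Theory.
Local Open Scope ring_scope.

Definition C : Type := (Rdefinitions.R)[i].
HB.instance Definition _ := GRing.Field.on C.

(* The centerless super Virasoro algebra S as a C-vector space:
   x = (even part, odd part), each a finitely supported function int -> C,
   i.e. x = sum_m x.1@_m L_m + sum_r x.2@_r G_r. *)
Definition SV : Type := ({malg C[int]} * {malg C[int]})%type.
HB.instance Definition _ := GRing.Lmodule.on SV.

Definition Lb (m : int) : SV := (<< m >>, 0).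
Definition Gb (r : int) : SV := (0, << r >>).

(* The super bracket, defined on the basis by
   [L_m,L_n] = (m-n) L_{m+n}, [L_m,G_r] = (m/2 - r) G_{m+r},
   [G_r,L_m] = - [L_m,G_r], [G_r,G_s] = 2 L_{r+s}, and extended bilinearly. *)
Definition sbr (x y : SV) : SV :=
  \sum_(m <- msupp x.1) \sum_(n <- msupp y.1)
      (x.1@_m * y.1@_n * (m - n)%:~R) *: Lb (m + n)
  + \sum_(m <- msupp x.1) \sum_(r <- msupp y.2)
      (x.1@_m * y.2@_r * (m%:~R / 2 - r%:~R)) *: Gb (m + r)
  - \sum_(r <- msupp x.2) \sum_(m <- msupp y.1)
      (x.2@_r * y.1@_m * (m%:~R / 2 - r%:~R)) *: Gb (m + r)
  + \sum_(r <- msupp x.2) \sum_(s <- msupp y.2)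
      (x.2@_r * y.2@_s * 2) *: Lb (r + s).

Definition even_elt (x : SV) : Prop := x.2 = 0.
Definition odd_elt (x : SV) : Prop := x.1 = 0.
Definition homog (x : SV) : Prop := even_elt x \/ odd_elt x.

Definition is_linear (f : SV -> SV) : Prop :=
  forall (a : C) (u v : SV), f (a *: u + v) = a *: f u + f v.

Definition even_derivation (D : SV -> SV) : Prop :=
  [/\ is_linear D,
      (forall x, even_elt x -> even_elt (D x)),
      (forall x, odd_elt x -> odd_elt (D x)) &
      (forall x y, homog x -> homog y ->
         D (sbr x y) = sbr (D x) y + sbr x (D y))].

Definition odd_derivation (D : SV -> SV) : Prop :=
  [/\ is_linear D,
      (forall x, even_elt x -> odd_elt (D x)),
      (forall x, odd_elt x -> even_elt (D x)),
      (forall x y, even_elt x -> homog y ->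
         D (sbr x y) = sbr (D x) y + sbr x (D y)) &
      (forall x y, odd_elt x -> homog y ->
         D (sbr x y) = sbr (D x) y - sbr x (D y))].

Definition derivation (D : SV -> SV) : Prop :=
  exists D0 D1, even_derivation D0 /\ odd_derivation D1 /\
                forall x, D x = D0 x + D1 x.

Definition local_derivation (Delta : SV -> SV) : Prop :=
  is_linear Delta /\
  forall x, exists D, derivation D /\ Delta x = D x.

From HB Require Import structures.
From mathcomp Require Import all_boot all_algebra finmap monalg ring zify.
From mathcomp.real_closed Require Import complex.
From mathcomp Require Import Rstruct.
Import GRing.Theory Num.Theory.
Local Open Scope ring_scope.

(* A local derivation agrees at each point with some derivation, but that
   derivation may depend on the point.  Evaluate it at the odd element
   x = G_a - z^(a-b) G_b, z <> 0.  By linearity and Delta(G_0) = 0 the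
   coefficients of Delta(x) are fixed combinations of those of Delta(G_a) and
   Delta(G_b), while for the derivation D attached to x the brackets with L_0
   and G_0 show that the coefficients of D(G_a) are those of D(G_0) shifted by
   a.  Hence a suitable coefficient sequence c of Delta(G_a), Delta(G_b) has
   Laurent polynomial sum_j c_j z^j = (z^a - z^(a-b) z^b) * (...) = 0 for every
   z <> 0, so c = 0.  For b = 0 this kills the even part of Delta(G_k) and every
   odd coefficient except those at k and 2k; for b = -k it shows that the
   coefficient at 2k, times z^(2k), does not depend on z, so it vanishes. *)

Section Laurent.
Context {R : fieldType}.
Hypothesis R_char0 : [pchar R] =i pred0.
Implicit Types (s r : seq int) (p F : int -> R) (z : R).

Definition laurent s p z : R := \sum_(i <- undup s) p i * z ^ i.

Lemma laurent_filter s p z :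
  laurent s p z = laurent [seq i <- s | i \in support p] p z.
Proof.
rewrite /laurent -filter_undup big_filter (bigID (mem (support p))) /=.
by rewrite [X in _ + X]big1 ?addr0 // => i /negbNE/eqP->; rewrite mul0r.
Qed.

Lemma laurent_support s r p z :
  {subset support p <= s} -> {subset support p <= r} ->
  laurent s p z = laurent r p z.
Proof.
move=> ps pr; rewrite laurent_filter [RHS]laurent_filter.
apply: perm_big; apply: perm_undup => i; rewrite !mem_filter.
by case: (boolP (i \in support p)) => // /[dup] /ps -> /pr ->.
Qed.

Lemma laurent_shift r F a z : z != 0 ->
  laurent [seq i + a | i <- r] (fun i => F (i - a)) z = z ^ a * laurent r F z.
Proof.
move=> z0; rewrite /laurent undup_map_inj; last exact: addIr.
rewrite big_map mulr_sumr; apply: eq_bigr => i _.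
by rewrite addrK expfzDr // mulrA mulrC.
Qed.

Lemma laurent_shift_cancel a b {s r p F z} : z != 0 ->
  {subset support p <= s} -> {subset support F <= r} ->
  (forall i, p i = F (i - a) - z ^ (a - b) * F (i - b)) ->
  laurent s p z = 0.
Proof.
move=> z0 ps Fr pE; set ra := [seq i + a | i <- r]; set rb := [seq i + b | i <- r].
have shift_supp c i : F (i - c) != 0 -> i \in [seq i + c | i <- r].
  move=> Fi; apply/mapP; exists (i - c); last by rewrite subrK.
  exact: Fr.
rewrite (@laurent_support _ (ra ++ rb)); first last.
- move=> i; rewrite supportE mem_cat pE.
  have [Fa|/shift_supp -> //] := eqVneq (F (i - a)) 0.
  rewrite Fa sub0r oppr_eq0 mulf_eq0 negb_or => /andP [_ /shift_supp ->].
  by rewrite orbT.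
- exact: ps.
rewrite /laurent; under eq_bigr do rewrite pE mulrBl -mulrA.
rewrite sumrB -mulr_sumr -!/(laurent _ _ z).
rewrite (@laurent_support _ ra) ?(@laurent_support _ rb (fun i => F (i - b)));
  try by move=> i /shift_supp; rewrite ?mem_cat => ->; rewrite ?orbT.
by rewrite !laurent_shift // mulrA -expfzDr // subrK subrr.
Qed.

Lemma natf_eq (m n : nat) : (m%:R == n%:R :> R) = (m == n).
Proof.
wlog le_nm : m n / (n <= m)%N.
  move=> H; case: (leqP n m) => [/H //|/ltnW /H].
  by rewrite eq_sym => ->; rewrite eq_sym.
by rewrite -subr_eq0 -natrB // (pcharf0P _).1 // subn_eq0 eqn_leq le_nm andbT.
Qed.

Lemma poly_eq0_on_nonzero (P : {poly R}) :
  (forall z, z != 0 -> P.[z] = 0) -> P = 0.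
Proof.
move=> P0; apply/eqP; apply: contraT => nzP.
have := max_poly_roots nzP (rs := [seq i.+1%:R | i <- iota 0 (size P)]).
rewrite size_map size_iota ltnn; apply.
  by apply/allP => _ /mapP [i _ ->]; apply/rootP/P0; rewrite (pcharf0P _).1.
by rewrite map_inj_uniq ?iota_uniq // => i j /eqP; rewrite natf_eq => /eqP [].
Qed.

Lemma laurent_coef_eq0 {s p} :
  (forall z, z != 0 -> laurent s p z = 0) -> {in s, forall j, p j = 0}.
Proof.
(* Multiplied by z^N with N >= |i| on s, the Laurent sum becomes a polynomial. *)
move=> p0; pose N := (\sum_(i <- undup s) `|i|)%N.
have absz_le i : i \in s -> (`|i| <= N)%N.
  by move=> si; rewrite /N (big_rem i) ?mem_undup //= leq_addr.
pose e (i : int) : nat := absz (i + N%:Z).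
have eE i : i \in s -> (e i)%:Z = i + N%:Z by move/absz_le; rewrite /e; lia.
pose P := \sum_(i <- undup s) p i *: 'X^(e i).
have P0 : P = 0.
  apply: poly_eq0_on_nonzero => z z0.
  rewrite horner_sum -[RHS](mulr0 (z ^ N%:Z)) -[in RHS](p0 z z0) /laurent mulr_sumr.
  apply: eq_big_seq => i; rewrite mem_undup => si.
  rewrite hornerZ hornerXn (_ : z ^+ e i = z ^ (i + N%:Z)); last by rewrite -eE.
  by rewrite expfzDr // mulrA mulrC.
move=> j sj; move/(congr1 (fun Q : {poly R} => Q`_(e j))): P0.
rewrite coef0 coef_sum (bigD1_seq j) ?mem_undup ?undup_uniq //=.
rewrite coefZ coefXn eqxx mulr1 big_seq_cond big1 ?addr0 // => i /andP [si ij].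
rewrite coefZ coefXn; case: eqP => [eij|]; last by rewrite mulr0.
rewrite mem_undup in si; have /addIr eq_ij : i + N%:Z = j + N%:Z by rewrite -!eE ?eij.
by rewrite eq_ij eqxx in ij.
Qed.

Lemma const_monomial_eq0 {n : int} {c d : R} : n != 0 ->
  (forall z, z != 0 -> c * z ^ n = d) -> c = 0.
Proof.
move=> n0 H; pose p j := if j == n then c else - d.
suff /(_ n (mem_head _ _)) : {in [:: n; 0], forall j, p j = 0} by rewrite /p eqxx.
apply: laurent_coef_eq0 => z z0.
rewrite /laurent undup_id; last by rewrite /= inE andbT.
by rewrite !big_cons big_nil /p eqxx eq_sym (negbTE n0) expr0z mulr1 addr0 H // subrr.
Qed.
End Laurent.

Lemma C_char0 : [pchar C] =i pred0.
Proof. exact: (@pchar_num Rdefinitions.R[i]). Qed.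

Lemma natC_eq0 (n : nat) : ((n%:R : C) == 0) = (n == 0)%N.
Proof. exact: (pcharf0P _).1 C_char0 n. Qed.

Lemma intC_eq0 (k : int) : ((k%:~R : C) == 0) = (k == 0).
Proof. exact: (@intr_eq0 Rdefinitions.R[i]). Qed.

Lemma sumr_pick (s : seq int) (F : int -> C) j : uniq s ->
  {subset support F <= s} -> \sum_(i <- s) F i * (i == j)%:R = F j.
Proof.
move=> us Fs; have [sj|sj] := boolP (j \in s).
  rewrite (bigD1_seq j) //= eqxx mulr1 big1 ?addr0 // => i /negbTE->.
  by rewrite mulr0.
have /eqP -> : F j == 0 by apply: contraR sj => /Fs.
rewrite big_seq big1 // => i si; have /negbTE-> : i != j by apply: contraNneq sj => <-.
by rewrite mulr0.
Qed.

Lemma mcoeff_sum_shift (g : {malg C[int]}) (F : int -> C) b j :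
  (\sum_(m <- msupp g) (g@_m * F m) *: (<< m + b >> : {malg C[int]}))@_j =
  g@_(j - b) * F (j - b).
Proof.
rewrite raddf_sum -(@sumr_pick (msupp g) (fun m => g@_m * F m)) ?fset_uniq //.
  apply: eq_bigr => m _; rewrite /= mcoeffZ mcoeffU.
  by rewrite (can2_eq (addrK b) (subrK b)).
by move=> m; rewrite supportE; apply: contraR => /mcoeff_outdom ->; rewrite mul0r.
Qed.

Lemma scaleLb c k : c *: Lb k = (c *: << k >>, 0).
Proof. by congr pair; rewrite /= scaler0. Qed.

Lemma scaleGb c k : c *: Gb k = (0, c *: << k >>).
Proof. by congr pair; rewrite /= scaler0. Qed.

Lemma sum_scaleLb (I : Type) (r : seq I) (c : I -> C) (k : I -> int) :
  \sum_(i <- r) c i *: Lb (k i) = (\sum_(i <- r) c i *: << k i >>, 0).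
Proof.
elim: r => [|i r IH]; rewrite ?big_nil ?big_cons ?IH ?scaleLb ?scaleGb //.
by congr pair; rewrite /= addr0.
Qed.

Lemma sum_scaleGb (I : Type) (r : seq I) (c : I -> C) (k : I -> int) :
  \sum_(i <- r) c i *: Gb (k i) = (0, \sum_(i <- r) c i *: << k i >>).
Proof.
elim: r => [|i r IH]; rewrite ?big_nil ?big_cons ?IH ?scaleLb ?scaleGb //.
by congr pair; rewrite /= addr0.
Qed.

Lemma sbrxG x b : sbr x (Gb b) =
  (\sum_(r <- msupp x.2) (x.2@_r * 2) *: << r + b >>,
   \sum_(m <- msupp x.1) (x.1@_m * (m%:~R / 2 - b%:~R)) *: << m + b >>).
Proof.
rewrite /sbr /= msupp0 msuppU oner_eq0.
under eq_bigr do rewrite big_seq_fset0.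
under [X in _ + X - _ + _]eq_bigr do rewrite big_seq_fset1 mcoeffUU mulr1.
under [X in _ - X + _]eq_bigr do rewrite big_seq_fset0.
under [X in _ + X]eq_bigr do rewrite big_seq_fset1 mcoeffUU mulr1.
rewrite !big1_eq add0r subr0 sum_scaleGb sum_scaleLb.
by congr pair; rewrite /= ?add0r ?addr0.
Qed.

Lemma sbrGx y b : sbr (Gb b) y =
  (\sum_(s <- msupp y.2) (y.2@_s * 2) *: << s + b >>,
   - \sum_(m <- msupp y.1) (y.1@_m * (m%:~R / 2 - b%:~R)) *: << m + b >>).
Proof.
rewrite /sbr /= msupp0 msuppU oner_eq0 !big_seq_fset0 !big_seq_fset1 !add0r.
rewrite mcoeffUU.
under eq_bigr do rewrite mul1r.
under [X in _ + X]eq_bigr do rewrite mul1r addrC.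
rewrite sum_scaleGb sum_scaleLb.
by congr pair; rewrite /= ?oppr0 ?add0r ?addr0.
Qed.

Lemma sbrLx y a : sbr (Lb a) y =
  (\sum_(n <- msupp y.1) (y.1@_n * (a - n)%:~R) *: << n + a >>,
   \sum_(r <- msupp y.2) (y.2@_r * (a%:~R / 2 - r%:~R)) *: << r + a >>).
Proof.
rewrite /sbr /= msupp0 msuppU oner_eq0 !big_seq_fset0 !big_seq_fset1 subr0 addr0.
rewrite mcoeffUU.
under eq_bigr do rewrite mul1r [in Lb _]addrC.
under [X in _ + X]eq_bigr do rewrite mul1r [in Gb _]addrC.
rewrite sum_scaleGb sum_scaleLb.
by congr pair; rewrite /= ?add0r ?addr0.
Qed.

Lemma sbrGG a b : sbr (Gb a) (Gb b) = 2 *: Lb (a + b).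
Proof.
rewrite sbrxG /= msupp0 msuppU oner_eq0 big_seq_fset0 big_seq_fset1.
by rewrite mcoeffUU mul1r scaleLb.
Qed.

Lemma sbrLG a b : sbr (Lb a) (Gb b) = (a%:~R / 2 - b%:~R) *: Gb (a + b).
Proof.
rewrite sbrxG /= msupp0 msuppU oner_eq0 big_seq_fset0 big_seq_fset1.
by rewrite mcoeffUU mul1r scaleGb.
Qed.

Lemma sbrxG1 x b j : (sbr x (Gb b)).1@_j = x.2@_(j - b) * 2.
Proof. by rewrite sbrxG mcoeff_sum_shift. Qed.

Lemma sbrxG2 x b j :
  (sbr x (Gb b)).2@_j = x.1@_(j - b) * ((j - b)%:~R / 2 - b%:~R).
Proof. by rewrite sbrxG mcoeff_sum_shift. Qed.

Lemma sbrGx1 y b j : (sbr (Gb b) y).1@_j = y.2@_(j - b) * 2.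
Proof. by rewrite sbrGx mcoeff_sum_shift. Qed.

Lemma sbrGx2 y b j :
  (sbr (Gb b) y).2@_j = - (y.1@_(j - b) * ((j - b)%:~R / 2 - b%:~R)).
Proof. by rewrite sbrGx /= mcoeffN mcoeff_sum_shift. Qed.

Lemma sbrLx1 y a j : (sbr (Lb a) y).1@_j = y.1@_(j - a) * (a - (j - a))%:~R.
Proof. by rewrite sbrLx mcoeff_sum_shift. Qed.

Lemma sbrLx2 y a j :
  (sbr (Lb a) y).2@_j = y.2@_(j - a) * (a%:~R / 2 - (j - a)%:~R).
Proof. by rewrite sbrLx mcoeff_sum_shift. Qed.

Section Linear.
Variable f : SV -> SV.
Hypothesis lin_f : is_linear f.

Lemma is_linear0 : f 0 = 0.
Proof.
have e := lin_f 1 0 0; rewrite scaler0 add0r scale1r -{1}[f 0]addr0 in e.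
exact: esym (addrI _ e).
Qed.

Lemma is_linearZ a u : f (a *: u) = a *: f u.
Proof. by rewrite -[a *: u]addr0 lin_f is_linear0 addr0. Qed.

Lemma is_linearD u v : f (u + v) = f u + f v.
Proof. by rewrite -[u]scale1r lin_f !scale1r. Qed.
End Linear.

Lemma even_Lb a : even_elt (Lb a). Proof. by []. Qed.

Lemma odd_Gb b : odd_elt (Gb b). Proof. by []. Qed.

Lemma homog_Lb a : homog (Lb a). Proof. by left. Qed.

Lemma homog_Gb b : homog (Gb b). Proof. by right. Qed.

Lemma odd_GbZ a b c : odd_elt (Gb a + c *: Gb b).
Proof. by rewrite /odd_elt /= scaler0 addr0. Qed.

Section EvenDerivation.
Variable D : SV -> SV.
Hypothesis hD : even_derivation D.

Lemma even_derivation_L0 j : (D (Lb 0)).1@_j = 2 * (D (Gb 0)).2@_j.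
Proof.
have [lin _ _ br] := hD.
have := br _ _ (homog_Gb 0) (homog_Gb 0).
rewrite sbrGG addr0 is_linearZ // => /(congr1 (fun v => v.1@_j)).
rewrite /= mcoeffZ mcoeffD sbrxG1 sbrGx1 subr0 => e.
apply: (@mulfI _ 2); last by rewrite e; ring.
by rewrite natC_eq0.
Qed.

Lemma even_derivation_G k j :
  (j - k)%:~R * (D (Gb k)).2@_j = (j - 3 * k)%:~R * (D (Gb 0)).2@_(j - k).
Proof.
have [lin _ _ br] := hD.
have := br _ _ (homog_Lb 0) (homog_Gb k).
rewrite sbrLG add0r is_linearZ // => /(congr1 (fun v => v.2@_j)).
rewrite /= mcoeffZ mcoeffD sbrxG2 sbrLx2 even_derivation_L0 !subr0.
rewrite !(rmorphB, rmorphM) /= => e.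
(* Subtract 0 = X - X, with X the left side of e, and rewrite its second copy by e. *)
rewrite -[LHS]subr0 -(subrr ((0%:~R / 2 - k%:~R) * (D (Gb k)).2@_j)) {2}e.
by field.
Qed.

Lemma even_derivation_pencil0 k c j :
  let F i := ((i - k) * (i - 2 * k))%:~R * (D (Gb 0)).2@_i in
  ((j - k) * (j - 2 * k))%:~R * (D (Gb k + c *: Gb 0)).2@_j = F (j - k) + c * F j.
Proof.
have [lin _ _ _] := hD.
rewrite /= is_linearD // is_linearZ // /= mcoeffD mcoeffZ mulrDr mulrCA; congr (_ + _).
rewrite rmorphM /= [_ * (j - 2 * k)%:~R]mulrC -mulrA even_derivation_G.
by rewrite mulrA -rmorphM; congr (_%:~R * _); ring.
Qed.

Lemma even_derivation_pencil_opp k c j :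
  let F i := ((i + 2 * k) * (i - 2 * k))%:~R * (D (Gb 0)).2@_i in
  ((j - k) * (j + k))%:~R * (D (Gb k + c *: Gb (- k))).2@_j =
  F (j - k) + c * F (j + k).
Proof.
have [lin _ _ _] := hD.
rewrite /= is_linearD // is_linearZ // /= mcoeffD mcoeffZ mulrDr mulrCA; congr (_ + _).
  rewrite rmorphM /= [_ * (j + k)%:~R]mulrC -mulrA even_derivation_G.
  by rewrite mulrA -rmorphM; congr (_%:~R * _); ring.
have Gopp := even_derivation_G (- k) j; rewrite mulrN !opprK in Gopp.
rewrite rmorphM /= -mulrA Gopp [(j - k)%:~R * _]mulrA -rmorphM.
by rewrite (_ : (j - k) * (j + 3 * k) = (j + k + 2 * k) * (j + k - 2 * k)) //; ring.
Qed.
End EvenDerivation.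

Section OddDerivation.
Variable D : SV -> SV.
Hypothesis hD : odd_derivation D.

Lemma odd_derivation_G k j :
  (j - k)%:~R * (D (Gb k)).1@_j = 2 * (D (Lb 0)).2@_(j - k).
Proof.
have [lin _ _ br _] := hD.
have := br _ _ (even_Lb 0) (homog_Gb k).
rewrite sbrLG add0r is_linearZ // => /(congr1 (fun v => v.1@_j)).
rewrite /= mcoeffZ mcoeffD sbrxG1 sbrLx1 !subr0 !(rmorphB, rmorphM) /= => e.
rewrite -[LHS]subr0 -(subrr ((0%:~R / 2 - k%:~R) * (D (Gb k)).1@_j)) {2}e.
by field.
Qed.

Lemma odd_derivation_L0_0 : (D (Lb 0)).2@_0 = 0.
Proof.
have := odd_derivation_G 0 0; rewrite subrr mul0r => /esym/eqP.
by rewrite mulf_eq0 natC_eq0 => /eqP.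
Qed.

Lemma odd_derivation_Gopp k : (D (Gb (- k))).1@_(- k) = (D (Gb k)).1@_k.
Proof.
have [lin _ _ _ br] := hD.
have := br _ _ (odd_Gb (- k)) (homog_Gb k).
rewrite sbrGG addNr is_linearZ // => /(congr1 (fun v => v.2@_0)).
rewrite /= mcoeffZ mcoeffB sbrxG2 sbrGx2 odd_derivation_L0_0 !sub0r opprK mulr0.
rewrite !(rmorphB, rmorphN) /= => e.
have [->|k0] := eqVneq k 0; first by rewrite oppr0.
have : (3 * k)%:~R / 2 * ((D (Gb k)).1@_k - (D (Gb (- k))).1@_(- k)) = 0.
  by rewrite [RHS]e rmorphM /=; field.
move/eqP; rewrite !mulf_eq0 invr_eq0 natC_eq0 intC_eq0 orbF subr_eq0.
by case/orP=> [/eqP|/eqP //]; lia.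
Qed.

Lemma odd_derivation_Gdiag k : (D (Gb k)).1@_k = (D (Gb 0)).1@_0.
Proof.
have [lin _ _ bre bro] := hD.
have [->|k0] := eqVneq k 0; first by [].
have := bro _ _ (odd_Gb (- k)) (homog_Gb 0).
rewrite sbrGG addr0 is_linearZ // => /(congr1 (fun v => v.2@_(- k))).
rewrite /= mcoeffZ mcoeffB sbrxG2 sbrGx2 subr0 subrr odd_derivation_Gopp => e3.
have := bre _ _ (even_Lb (- k)) (homog_Gb k).
rewrite sbrLG addNr is_linearZ // => /(congr1 (fun v => v.1@_0)).
rewrite /= mcoeffZ mcoeffD sbrxG1 sbrLx1 !sub0r opprK [_ * 2]mulrC e3 => /eqP.
rewrite -subr_eq0 !(rmorphB, rmorphN) /= => /eqP e4.
have : (5 * k)%:~R / 2 * ((D (Gb k)).1@_k - (D (Gb 0)).1@_0) = 0.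
  by rewrite -[RHS]e4 rmorphM /=; field.
move/eqP; rewrite !mulf_eq0 invr_eq0 natC_eq0 intC_eq0 orbF subr_eq0.
by case/orP=> [/eqP|/eqP //]; lia.
Qed.

Lemma odd_derivation_Gshift k j : (D (Gb k)).1@_j = (D (Gb 0)).1@_(j - k).
Proof.
have [->|jk] := eqVneq j k; first by rewrite subrr odd_derivation_Gdiag.
have := odd_derivation_G k j; have := odd_derivation_G 0 (j - k).
rewrite !subr0 => <-; apply: mulfI.
by rewrite intC_eq0 subr_eq0.
Qed.

Lemma odd_derivation_pencil a b c j :
  (D (Gb a + c *: Gb b)).1@_j =
  (D (Gb 0)).1@_(j - a) + c * (D (Gb 0)).1@_(j - b).
Proof.
have [lin _ _ _ _] := hD.
rewrite is_linearD // is_linearZ // /= mcoeffD mcoeffZ.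
by rewrite (odd_derivation_Gshift a) (odd_derivation_Gshift b).
Qed.
End OddDerivation.

Lemma malg_laurent_eq0 (u : {malg C[int]}) (m : int -> C) :
  (forall z : C, z != 0 -> laurent (msupp u) (fun j => m j * u@_j) z = 0) ->
  forall j, m j * u@_j = 0.
Proof.
move=> H j; have [ju|/mcoeff_outdom->] := boolP (j \in msupp u); last by rewrite mulr0.
by have /(_ j ju) := laurent_coef_eq0 C_char0 H.
Qed.

Lemma support_mcoeffM (u : {malg C[int]}) (m : int -> C) :
  {subset support (fun j => m j * u@_j) <= msupp u}.
Proof.
by move=> j; rewrite supportE -mcoeff_neq0; apply: contra => /eqP->; rewrite mulr0.
Qed.

Section LocalDerivation.
Variable Delta : SV -> SV.
Hypothesis hDelta : local_derivation Delta.
Hypothesis Delta_G0 : Delta (Gb 0) = 0.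

Lemma local_derivation_pencil a b c :
  exists D0 D1, [/\ even_derivation D0, odd_derivation D1 &
    Delta (Gb a) + c *: Delta (Gb b) = D0 (Gb a + c *: Gb b) + D1 (Gb a + c *: Gb b)].
Proof.
have [lin /(_ (Gb a + c *: Gb b)) [D [[D0 [D1 [e0 [o1 DE]]]] Dx]]] := hDelta.
by exists D0, D1; split; rewrite // -is_linearZ // -is_linearD // Dx DE.
Qed.

Lemma Delta_G_even k : (Delta (Gb k)).1 = 0.
Proof.
apply/malgP => j; rewrite mcoeff0 -[LHS]mul1r.
apply: (@malg_laurent_eq0 _ (fun=> 1)) => z z0.
have [D0 [D1 [[_ _ D0odd _] o1 DE]]] := local_derivation_pencil k 0 (- z ^ k).
apply: (laurent_shift_cancel k 0 z0 (support_mcoeffM _ _)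
          (@support_mcoeffM (D1 (Gb 0)).1 (fun=> 1))) => i.
move/(congr1 (fun v => v.1@_i)): DE; rewrite Delta_G0 scaler0 addr0 /= mcoeffD.
rewrite (D0odd _ (odd_GbZ _ _ _)) mcoeff0 add0r odd_derivation_pencil // => ->.
by rewrite !mul1r !subr0 mulNr.
Qed.

Lemma Delta_G_odd_supp_mul k j :
  ((j - k) * (j - 2 * k))%:~R * (Delta (Gb k)).2@_j = 0.
Proof.
apply: (@malg_laurent_eq0 _ (fun j => ((j - k) * (j - 2 * k))%:~R)) => z z0.
have [D0 [D1 [e0 [_ _ D1odd _ _] DE]]] := local_derivation_pencil k 0 (- z ^ k).
apply: (laurent_shift_cancel k 0 z0 (support_mcoeffM _ _)
          (@support_mcoeffM (D0 (Gb 0)).2 (fun i => ((i - k) * (i - 2 * k))%:~R))) => i.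
move/(congr1 (fun v => v.2@_i)): DE; rewrite Delta_G0 scaler0 addr0 /= mcoeffD.
rewrite (D1odd _ (odd_GbZ _ _ _)) mcoeff0 addr0 => ->.
by rewrite even_derivation_pencil0 // !subr0 mulNr.
Qed.

Lemma Delta_G_supp {k j} : j != k -> j != 2 * k -> (Delta (Gb k)).2@_j = 0.
Proof.
move=> jk j2k; move/eqP: (Delta_G_odd_supp_mul k j).
by rewrite mulf_eq0 intC_eq0 mulf_eq0 !subr_eq0 (negbTE jk) (negbTE j2k) => /eqP.
Qed.

Lemma Delta_G_double_opp k : k != 0 -> forall z, z != 0 ->
  (Delta (Gb k)).2@_(2 * k) * z ^ (2 * k) = (Delta (Gb (- k))).2@_(- (2 * k)).
Proof.
move=> k0 z z0; set up := (Delta (Gb k)).2; set um := (Delta (Gb (- k))).2.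
have [D0 [D1 [e0 [_ _ D1odd _ _] DE]]] := local_derivation_pencil k (- k) (- z ^ (2 * k)).
pose p j := ((j - k) * (j + k))%:~R * (up@_j - z ^ (2 * k) * um@_j).
have um_supp j : j != - k -> j != - (2 * k) -> um@_j = 0.
  by move=> ? ?; apply: Delta_G_supp; rewrite ?mulrN.
(* The odd parts of Delta(G_k), Delta(G_-k) live on {k, 2k}, {-k, -2k}. *)
have supp_p : {subset support p <= [:: 2 * k; - (2 * k)]}.
  move=> j; rewrite supportE; apply: contraR; rewrite !inE negb_or => /andP [j2k j2mk].
  rewrite /p; have [->|jk] := eqVneq j k; first by rewrite subrr !mul0r.
  have [->|jmk] := eqVneq j (- k); first by rewrite addNr mulr0 mul0r.
  by rewrite (Delta_G_supp jk j2k) (um_supp _ jmk j2mk) mulr0 subr0 mulr0.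
have : laurent [:: 2 * k; - (2 * k)] p z = 0.
  apply: (laurent_shift_cancel k (- k) z0 supp_p
    (@support_mcoeffM (D0 (Gb 0)).2 (fun i => ((i + 2 * k) * (i - 2 * k))%:~R))) => i.
  move/(congr1 (fun v => v.2@_i)): DE.
  rewrite /= !mcoeffD mcoeffZ (D1odd _ (odd_GbZ _ _ _)) mcoeff0 addr0 mulNr => Ei.
  rewrite /p Ei even_derivation_pencil_opp // opprK mulNr (_ : k + k = 2 * k) //.
  lia.
have k2 : 2 * k != - (2 * k) by apply: contra_neq k0; lia.
rewrite /laurent undup_id /= ?inE ?andbT // !big_cons big_nil addr0 /p.
rewrite (um_supp (2 * k)) ?(Delta_G_supp (k := k) (j := - (2 * k)));
  try (apply: contra_neq k0; lia).
rewrite -invr_expz => E.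
have k3 : ((3 * k * k)%:~R : C) != 0.
  by rewrite intC_eq0 !mulf_eq0 (negbTE k0).
apply: (mulfI k3); apply/eqP; rewrite -subr_eq0 -E !rmorphM /=.
by apply/eqP; field; rewrite expfz_neq0.
Qed.

Lemma Delta_G_double k : k != 0 -> (Delta (Gb k)).2@_(2 * k) = 0.
Proof.
move=> k0; apply: (const_monomial_eq0 C_char0 _ (Delta_G_double_opp k k0)).
by rewrite mulf_eq0 negb_or k0.
Qed.
End LocalDerivation.

Theorem lemma3p5 (Delta : SV -> SV) :
  local_derivation Delta -> Delta (Gb 0) = 0 ->
  forall m : int, m != 0 -> exists a : C, Delta (Gb m) = a *: Gb m.
Proof.
move=> hDelta Delta_G0 m m0; exists (Delta (Gb m)).2@_m.
apply: injective_projections => /=.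
  by rewrite (Delta_G_even _ hDelta Delta_G0) scaler0.
apply/malgP => j; rewrite mcoeffZ mcoeffU.
have [<-|jm] := eqVneq m j; first by rewrite mulr1.
rewrite mulr0; have [->|j2m] := eqVneq j (2 * m); first exact: Delta_G_double.
by rewrite eq_sym in jm; exact: Delta_G_supp.
Qed.
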